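(* Let $I=(i_1<i_2<\cdots<i_r)$ be strictly increasing with $r\geq1$, and let $\chi_I=\sum_{\varepsilon\in\{0,1\}^r}a_I^\varepsilon w_I^\varepsilon$ with $a_I^\varepsilon\in\mathcal B$. Then: (A) if $\alpha(\chi_I)+\beta(\chi_I)=\gamma(\chi_I)$, then $\chi_I=a(S_I-w_I)$ for some $a\in\mathcal B$; (B) if $\beta(\chi_I)=\gamma(\chi_I)+\delta(\chi_I)$, then $\chi_I=a(S_I-w'_I)$ for some $a\in\mathcal B$.
   Context: $\mathcal B$ is a graded commutative rational algebra and $W$ a graded rational vector space concentrated in odd degrees with basis $\{w_i\}$ indexed by a totally ordered set. In $\mathcal B\otimes\land W\otimes\land W$ write $w_i^0=w_i=1\otimes w_i\otimes1$, $w_i^1=w'_i=1\otimes1\otimes w_i$, $w_I^\varepsilon=w_{i_1}^{\epsilon_1}\cdots w_{i_r}^{\epsilon_r}$, $w_I=w_{i_1}\cdots w_{i_r}$, $w'_I=w'_{i_1}\cdots w'_{i_r}$, $S_I=(w_{i_1}+w'_{i_1})\cdots(w_{i_r}+w'_{i_r})$. In $\mathcal B\otimes\land W^{\otimes3}$ write $w,w',w''$ for $w$ in the three copies. Algebra maps $\alpha,\beta,\gamma,\delta\colon\mathcal B\otimes\land W\otimes\land W\to\mathcal B\otimes\land W\otimes\land W\otimes\land W$, identity on $\mathcal B$: $\alpha(w)=w,\alpha(w')=w'$; $\beta(w)=w+w',\beta(w')=w''$; $\gamma(w)=w,\gamma(w')=w'+w''$; $\delta(w)=w',\delta(w')=w''$.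 *)

From HB Require Import structures.
From mathcomp Require Import all_boot all_order all_algebra.
Unset Printing Implicit Defensive.
Import Order.TTheory GRing.Theory Num.Theory.
Local Open Scope ring_scope.

(* Concrete model of B (x) /\W (x) /\W and B (x) /\W (x) /\W (x) /\W.
   A generator is a pair (c, i) : nat * T meaning "w_i in copy number c"
   (c = 0 : w_i, c = 1 : w'_i, c = 2 : w''_i).  All generators have odd
   degree, so the algebra is B (x) (exterior algebra on these generators),
   a free B-module on the duplicate-free monomials.
   An element is represented by its coordinate function  seq gen -> B :
   for a word m of generators, the value is the coefficient of the
   monomial m (zero unless m is duplicate-free; the coefficients at two
   permutations of a word differ by the sign of the permutation).
   Two elements are equal iff their coordinate functions agree at every m. *)

Section Ext.
Context {disp : Order.disp_t} {T : orderType disp} {B : lmodType rat}.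

Definition gen := (nat * T)%type.

(* an auxiliary total order on generators, used only to compute signs *)
Definition gen_lt (g h : gen) : bool :=
  ((g.2 < h.2)%O || ((g.2 == h.2) && (g.1 < h.1)%N)).

Fixpoint inv (w : seq gen) : nat :=
  match w with
  | [::] => 0%N
  | g :: w' => (count (fun h => gen_lt h g) w' + inv w')%N
  end.

(* coefficient of the monomial m in the word (product of generators) w *)
Definition wcoef (w m : seq gen) : rat :=
  if uniq w && perm_eq w m then (-1) ^+ (inv w + inv m) else 0.

(* expansion of a product L_1 L_2 ... L_r of linear forms, each L_k being
   a sum of generators (given as the list of its summands), as a list of
   words (each with coefficient 1) *)
Fixpoint prodlin (Ls : seq (seq gen)) : seq (seq gen) :=
  match Ls with
  | [::] => [:: [::]]
  | L :: Ls' => [seq g :: w | g <- L, w <- prodlin Ls']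
  end.

(* the element  a * L_1 * ... * L_r  (a in B) *)
Definition elt_of (Ls : seq (seq gen)) (a : B) : seq gen -> B :=
  fun m => \sum_(w <- prodlin Ls) (wcoef w m) *: a.

(* An algebra map B (x) /\W (x) /\W -> B (x) /\W^{(x)3}, identity on B, is
   determined by the images f e i of the generators w_i^e (e = false : w_i,
   e = true : w'_i); here each image is a sum of generators. *)
Definition alpha (e : bool) (i : T) : seq gen :=
  if e then [:: (1%N, i)] else [:: (0%N, i)].
Definition beta (e : bool) (i : T) : seq gen :=
  if e then [:: (2%N, i)] else [:: (0%N, i); (1%N, i)].
Definition gamma (e : bool) (i : T) : seq gen :=
  if e then [:: (1%N, i); (2%N, i)] else [:: (0%N, i)].
Definition delta (e : bool) (i : T) : seq gen :=
  if e then [:: (2%N, i)] else [:: (1%N, i)].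
(* the identity (the element itself, in B (x) /\W (x) /\W) *)
Definition id2 (e : bool) (i : T) : seq gen :=
  if e then [:: (1%N, i)] else [:: (0%N, i)].

Definition mono_img (f : bool -> T -> seq gen) (I : seq T) (eps : seq bool)
  (a : B) : seq gen -> B :=
  elt_of [seq f p.1 p.2 | p <- zip eps I] a.

(* image under f of  chi_I = sum_eps a_I^eps w_I^eps *)
Definition chi_img (f : bool -> T -> seq gen) (I : seq T)
  (A : (size I).-tuple bool -> B) : seq gen -> B :=
  fun m => \sum_(eps : (size I).-tuple bool) mono_img f I eps (A eps) m.

Definition S_minus_w (I : seq T) (a : B) : seq gen -> B :=
  fun m => elt_of [seq [:: (0%N, i); (1%N, i)] | i <- I] a m
           - elt_of [seq [:: (0%N, i)] | i <- I] a m.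
Definition S_minus_w' (I : seq T) (a : B) : seq gen -> B :=
  fun m => elt_of [seq [:: (0%N, i); (1%N, i)] | i <- I] a m
           - elt_of [seq [:: (1%N, i)] | i <- I] a m.
End Ext.

From HB Require Import structures.
From mathcomp Require Import all_boot all_order all_algebra.
Import Order.TTheory GRing.Theory Num.Theory.
Local Open Scope ring_scope.

(* For I = (i_1 < ... < i_r) and a choice of copies
   c_1, ..., c_r, the monomial  w_{i_1}^{(c_1)} ... w_{i_r}^{(c_r)}  is a basis
   element, and its coefficient in the image of chi_I under any of the maps
   alpha, beta, gamma, delta (each sends w_i^e to a sum of distinct generators
   of index i) is obtained by selecting, factor by factor, the summand of
   copy c_k: it is the sum of the a_I^eps over those eps whose images contain
   all chosen generators ([chi_coef_word]).  Reading off the equations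
   alpha + beta = gamma (resp. beta = gamma + delta) at the monomials built
   from copies {0,1} and {1,2} forces a_I^(0..0) = 0 and all other a_I^eps
   equal (resp. a_I^(1..1) = 0 and all other a_I^eps equal).  Finally
   S_I = sum_eps w_I^eps ([prodlin_pairs]), so such a chi_I is a (S_I - w_I)
   (resp. a (S_I - w'_I)).  The argument does not need r >= 1. *)

Lemma sum_tuple_cons (V : zmodType) n (F : n.+1.-tuple bool -> V) :
  \sum_(t : n.+1.-tuple bool) F t =
  \sum_(t : n.-tuple bool) F [tuple of false :: t]
  + \sum_(t : n.-tuple bool) F [tuple of true :: t].
Proof.
rewrite addrC -(big_bool _ (fun b => \sum_(t : n.-tuple bool) F [tuple of b :: t])).
rewrite pair_big /=.
rewrite (reindex (fun p : bool * n.-tuple bool => [tuple of p.1 :: p.2])) //=.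
apply: onW_bij; exists (fun t => (thead t, [tuple of behead t])) => [[b t]|t] /=.
  by congr (_, _); apply: val_inj.
by rewrite [RHS]tuple_eta.
Qed.

Lemma sum_tuple_delta (V : lmodType rat) n (F : n.-tuple bool -> V) t :
  \sum_(eps : n.-tuple bool) ((eps == t)%:R : rat) *: F eps = F t.
Proof.
rewrite (bigD1 t) //= eqxx scale1r big1 ?addr0 // => e /negbTE ->.
by rewrite scale0r.
Qed.

Lemma map_tuple_id (U : Type) n (t : n.-tuple U) : map_tuple id t = t.
Proof. by apply: val_inj; rewrite /= map_id. Qed.

Lemma map_tuple_const (U V : Type) n (c : V) (t : n.-tuple U) :
  map_tuple (fun _ => c) t = [tuple of nseq n c].
Proof. by apply: val_inj; case: t => s /= /eqP <-; elim: s => //= x s ->. Qed.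

Lemma all_pred1_tuple (U : eqType) n (c : U) (t : n.-tuple U) :
  all (pred1 c) t = (t == [tuple of nseq n c]).
Proof.
apply/all_pred1P/eqP => [E|->]; last by rewrite /= size_nseq.
by apply: val_inj; rewrite /= E size_tuple.
Qed.

Section Monomials.
Context {disp : Order.disp_t} {T : orderType disp}.
Local Notation G := (gen (T := T)).

Definition word (h : bool -> nat) (e : seq bool) (I : seq T) : seq G :=
  [seq (h p.1, p.2) | p <- zip e I].

Lemma word_snd h (e : seq bool) (I : seq T) :
  size e = size I -> map snd (word h e I) = I.
Proof. by move=> se; rewrite -map_comp; apply: unzip2_zip; rewrite se. Qed.

Lemma word_nseq h c (I : seq T) :
  word h (nseq (size I) c) I = [seq (h c, i) | i <- I].
Proof. by rewrite /word; elim: I => //= i I ->. Qed.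

Lemma big_prodlin_cons (V : zmodType) (F : seq G -> V) L Ls :
  \sum_(w <- prodlin (L :: Ls)) F w =
  \sum_(g <- L) \sum_(w <- prodlin Ls) F (g :: w).
Proof.
by rewrite /= big_flatten /= big_map; apply: eq_bigr => g _; rewrite big_map.
Qed.

Lemma prodlin_single (s : seq G) : prodlin [seq [:: g] | g <- s] = [:: s].
Proof. by elim: s => //= g s ->. Qed.

Lemma prodlin_pairs (V : zmodType) (I : seq T) (F : seq G -> V) :
  \sum_(w <- prodlin [seq [:: (0%N, i); (1%N, i)] | i <- I]) F w
  = \sum_(eps : (size I).-tuple bool) F (word nat_of_bool eps I).
Proof.
elim: I F => [|i I IH] F.
  by rewrite /= big_seq1 (big_pred1 [tuple]) // => -[[|x s] p].
by rewrite map_cons big_prodlin_cons !big_cons big_nil addr0 !IH sum_tuple_cons.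
Qed.

Lemma prodlin_snd (Ls : seq (seq G)) I w :
  all2 (fun L i => all (fun g : G => g.2 == i) L) Ls I ->
  w \in prodlin Ls -> map snd w = I.
Proof.
elim: Ls I w => [|L Ls IH] [|i I] w //=; first by rewrite inE => _ /eqP ->.
move=> /andP[hL hLs] /flatten_mapP[g gL /mapP[w' w'P ->]] /=.
by rewrite (eqP (allP hL g gL)) (IH _ _ hLs w'P).
Qed.

(* Words whose index sequence is the same strictly increasing I are
   duplicate-free and sorted, so their pairing is the Kronecker delta. *)
Lemma wcoef_sorted (I : seq T) (w m : seq G) :
  sorted (fun x y => (x < y)%O) I -> map snd w = I -> map snd m = I ->
  wcoef w m = (w == m)%:R.
Proof.
move=> HI hw hm; pose lt2 := relpre (@snd nat T) (<%O : rel T).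
have tr : transitive lt2 by move=> y x z; apply: lt_trans.
have irr : irreflexive lt2 by move=> x; apply: ltxx.
have sw : sorted lt2 w by rewrite -sorted_map hw.
have sm : sorted lt2 m by rewrite -sorted_map hm.
rewrite /wcoef (sorted_uniq tr irr sw) /=; case: eqP => [->|ne].
  by rewrite perm_refl -signr_odd oddD addbb expr0.
by case: ifP => // pwm; case: ne; apply: (irr_sorted_eq tr irr sw sm (perm_mem pwm)).
Qed.

Lemma sum_mem_delta (L : seq G) x : uniq L ->
  \sum_(g <- L) ((g == x)%:R : rat) = (x \in L)%:R.
Proof.
move=> uL; rewrite -(count_uniq_mem x uL) -sum1_count natr_sum [RHS]big_mkcond.
by apply: eq_bigr => g _ /=; case: (g == x).
Qed.

Lemma sum_prodlin_delta (Ls : seq (seq G)) m : all uniq Ls ->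
  \sum_(w <- prodlin Ls) ((w == m)%:R : rat) = (all2 (fun x L => x \in L) m Ls)%:R.
Proof.
elim: Ls m => [|L Ls IH] [|x m] /=; rewrite ?big_seq1 // => /andP[uL uLs].
  by rewrite big_prodlin_cons big1 // => g _; rewrite big1.
rewrite big_prodlin_cons -mulnb natrM -IH // -sum_mem_delta // mulr_suml.
apply: eq_bigr => g _; rewrite mulr_sumr; apply: eq_bigr => w _.
by rewrite eqseq_cons -mulnb natrM.
Qed.

End Monomials.

Section Images.
Context {disp : Order.disp_t} {T : orderType disp} {B : lmodType rat}.
Local Notation G := (gen (T := T)).

Definition index_local (f : bool -> T -> seq G) : Prop :=
  forall e i, all (fun g : G => g.2 == i) (f e i) && uniq (f e i).

Lemma index_local_maps :
  [/\ index_local alpha, index_local beta, index_local gamma & index_local delta].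
Proof. by split=> -[] i /=; rewrite ?eqxx ?inE. Qed.

Lemma mono_img_coef (f : bool -> T -> seq G) (I : seq T) (eps : seq bool)
    (a : B) (m : seq G) :
  index_local f -> sorted (fun x y => (x < y)%O) I ->
  size eps = size I -> map snd m = I ->
  mono_img f I eps a m =
  (all2 (fun x L => x \in L) m [seq f p.1 p.2 | p <- zip eps I])%:R *: a.
Proof.
move=> hf HI se hm.
have idxLs : all2 (fun L i => all (fun g : G => g.2 == i) L)
    [seq f p.1 p.2 | p <- zip eps I] I.
  elim: I eps {HI hm} se => [|i I IH] [|e eps] //= [se].
  by rewrite (IH _ se) andbT; case/andP: (hf e i).
have uLs : all uniq [seq f p.1 p.2 | p <- zip eps I].
  by apply/allP => _ /mapP[p _ ->]; case/andP: (hf p.1 p.2).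
rewrite /mono_img /elt_of -scaler_suml -sum_prodlin_delta //.
congr (_ *: _); apply: eq_big_seq => w wP.
exact: wcoef_sorted _ _ _ HI (prodlin_snd _ _ _ idxLs wP) hm.
Qed.

Lemma all2_mem_word (f : bool -> T -> seq G) (h : bool -> nat) (Q : pred bool)
    (g : bool -> bool) (I : seq T) (eps b : seq bool) :
  (forall e c i, ((h c, i) \in f e i) = Q c && (e == g c)) ->
  size eps = size I -> size b = size I ->
  all2 (fun x L => x \in L) (word h b I) [seq f p.1 p.2 | p <- zip eps I]
  = all Q b && (eps == map g b).
Proof.
move=> hm; elim: I eps b => [|i I IH] [|e eps] [|c b] //= [s1] [s2].
by rewrite hm IH // eqseq_cons; case: (Q c); case: (e == g c); case: (all Q b).
Qed.

End Images.

Section Coefficients.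
Context {disp : Order.disp_t} {T : orderType disp} {B : lmodType rat}.
Variable I : seq T.
Hypothesis HI : sorted (fun x y => (x < y)%O) I.
Variable A : (size I).-tuple bool -> B.

Local Notation const c := [tuple of nseq (size I) c].

Definition copy12 (c : bool) : nat := if c then 2%N else 1%N.

Lemma mem_alpha01 e c (i : T) :
  ((nat_of_bool c, i) \in alpha e i) = predT c && (e == c).
Proof. by case: e; case: c; rewrite /= !inE ?xpair_eqE ?eqxx. Qed.
Lemma mem_beta01 e c (i : T) :
  ((nat_of_bool c, i) \in beta e i) = predT c && (e == false).
Proof. by case: e; case: c; rewrite /= !inE ?xpair_eqE ?eqxx. Qed.
Lemma mem_gamma01 e c (i : T) :
  ((nat_of_bool c, i) \in gamma e i) = predT c && (e == c).
Proof. by case: e; case: c; rewrite /= !inE ?xpair_eqE ?eqxx. Qed.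
Lemma mem_delta01 e c (i : T) :
  ((nat_of_bool c, i) \in delta e i) = pred1 true c && (e == false).
Proof. by case: e; case: c; rewrite /= !inE ?xpair_eqE ?eqxx. Qed.
Lemma mem_alpha12 e c (i : T) :
  ((copy12 c, i) \in alpha e i) = pred1 false c && (e == true).
Proof. by case: e; case: c; rewrite /= !inE ?xpair_eqE ?eqxx. Qed.
Lemma mem_beta12 e c (i : T) :
  ((copy12 c, i) \in beta e i) = predT c && (e == c).
Proof. by case: e; case: c; rewrite /= !inE ?xpair_eqE ?eqxx. Qed.
Lemma mem_gamma12 e c (i : T) :
  ((copy12 c, i) \in gamma e i) = predT c && (e == true).
Proof. by case: e; case: c; rewrite /= !inE ?xpair_eqE ?eqxx. Qed.

Lemma chi_coef_word {f : bool -> T -> seq gen} {h : bool -> nat} {Q : pred bool}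
    {g : bool -> bool} :
  index_local f -> (forall e c i, ((h c, i) \in f e i) = Q c && (e == g c)) ->
  forall b : (size I).-tuple bool,
  chi_img f I A (word h b I) = if all Q b then A (map_tuple g b) else 0.
Proof.
move=> hf hm b; rewrite /chi_img.
under eq_bigr do rewrite (mono_img_coef _ _ _ _ _ hf HI (size_tuple _)
  (word_snd _ _ _ (size_tuple b)))
  (all2_mem_word _ _ _ _ _ _ _ hm (size_tuple _) (size_tuple _)).
case: (all Q b) => /=; last by rewrite big1 // => e _; rewrite scale0r.
by rewrite -[RHS](sum_tuple_delta _ _ A); apply: eq_bigr => e _; rewrite -val_eqE.
Qed.

(* Part (A) on coefficients: at w_I the equation reads a_0 + a_0 = a_0; at
   the word w_{i_k}^{(1 + b_k)} (copies 1/2, b <> (0..0)) it reads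
   0 + a_b = a_(1..1). *)
Lemma coefs_alpha_beta_gamma :
  (forall m, chi_img alpha I A m + chi_img beta I A m = chi_img gamma I A m) ->
  A (const false) = 0 /\ forall b, b != const false -> A b = A (const true).
Proof.
have [la lb lg _] := @index_local_maps _ T.
move=> H; split.
  have := H (word nat_of_bool (const false) I).
  rewrite (chi_coef_word la mem_alpha01) (chi_coef_word lb mem_beta01).
  rewrite (chi_coef_word lg mem_gamma01) !all_predT.
  by rewrite map_tuple_id map_tuple_const => /(canRL (addrK _)); rewrite subrr.
move=> b nb; have := H (word copy12 b I).
rewrite (chi_coef_word la mem_alpha12) (chi_coef_word lb mem_beta12).
rewrite (chi_coef_word lg mem_gamma12).
by rewrite !all_predT all_pred1_tuple (negbTE nb) add0r map_tuple_id map_tuple_const.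
Qed.

(* Part (B) on coefficients: at w'_I the equation reads
   a_(0..0) = a_(1..1) + a_(0..0); at any other w_I^b it reads
   a_(0..0) = a_b + 0. *)
Lemma coefs_beta_gamma_delta :
  (forall m, chi_img beta I A m = chi_img gamma I A m + chi_img delta I A m) ->
  A (const true) = 0 /\ forall b, b != const true -> A b = A (const false).
Proof.
have [_ lb lg ld] := @index_local_maps _ T.
move=> H; split=> [|b nb].
  have := H (word nat_of_bool (const true) I).
  rewrite (chi_coef_word lb mem_beta01) (chi_coef_word lg mem_gamma01).
  rewrite (chi_coef_word ld mem_delta01) !all_predT all_pred1_tuple eqxx.
  by rewrite map_tuple_id map_tuple_const => /esym /(canRL (addrK _)); rewrite subrr.
have := H (word nat_of_bool b I).
rewrite (chi_coef_word lb mem_beta01) (chi_coef_word lg mem_gamma01).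
rewrite (chi_coef_word ld mem_delta01) !all_predT all_pred1_tuple (negbTE nb).
by rewrite addr0 map_tuple_id map_tuple_const.
Qed.

Lemma chi_id2_coord m :
  chi_img id2 I A m = \sum_(eps : (size I).-tuple bool)
                        wcoef (word nat_of_bool eps I) m *: A eps.
Proof.
apply: eq_bigr => eps _; rewrite /mono_img /elt_of.
have -> : [seq id2 p.1 p.2 | p <- zip eps I]
    = [seq [:: g] | g <- word nat_of_bool eps I].
  by rewrite -map_comp; apply: eq_map => -[[] i].
by rewrite prodlin_single big_seq1.
Qed.

Lemma chi_id2_all_but_const (c : bool) (a : B) :
  A (const c) = 0 -> (forall b, b != const c -> A b = a) ->
  forall m, chi_img id2 I A m =
    elt_of [seq [:: (0%N, i); (1%N, i)] | i <- I] a m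
    - elt_of [seq [:: (nat_of_bool c, i)] | i <- I] a m.
Proof.
move=> Ac Ab m; rewrite chi_id2_coord /elt_of prodlin_pairs.
have -> : [seq [:: (nat_of_bool c, i)] | i <- I]
    = [seq [:: g] | g <- word nat_of_bool (const c) I] by rewrite word_nseq -map_comp.
rewrite prodlin_single big_seq1 (bigD1 (const c)) //= [in RHS](bigD1 (const c)) //=.
rewrite Ac scaler0 add0r addrAC subrr add0r.
by apply: eq_bigr => b nb; rewrite Ab.
Qed.

End Coefficients.

Theorem mainTheorem11 (disp : Order.disp_t) (T : orderType disp)
  (B : lmodType rat) (I : seq T) (HI : sorted (fun x y => (x < y)%O) I)
  (Hr : (0 < size I)%N) (A : (size I).-tuple bool -> B) :
  ((forall m, chi_img alpha I A m + chi_img beta I A m = chi_img gamma I A m) ->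
     exists a : B, forall m, chi_img id2 I A m = S_minus_w I a m) /\
  ((forall m, chi_img beta I A m = chi_img gamma I A m + chi_img delta I A m) ->
     exists a : B, forall m, chi_img id2 I A m = S_minus_w' I a m).
Proof.
split.
- move=> /(coefs_alpha_beta_gamma _ HI) [A0 Aconst].
  exists (A [tuple of nseq (size I) true]).
  exact: (chi_id2_all_but_const _ _ false _ A0 Aconst).
- move=> /(coefs_beta_gamma_delta _ HI) [A1 Aconst].
  exists (A [tuple of nseq (size I) false]).
  exact: (chi_id2_all_but_const _ _ true _ A1 Aconst).
Qed.
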